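(* Let $\mathbb{F}_2=\langle a\rangle\ast\langle b\rangle$ and let $f=f_A\ast f_B$ be a split quasimorphism with bounded factors $f_A:\langle a\rangle\to\mathbb{R}$, $f_B:\langle b\rangle\to\mathbb{R}$. For $n\in\mathbb{Z}\setminus\{0\}$ let $\tau_n$ be the automorphism $a\mapsto a$, $b\mapsto a^nb$. Then the following are equivalent: (i) $\tau_n.f=f$; (ii) $\tau_n.\widehat f=\widehat f$; (iii) $\tau_n.\omega_f=\omega_f$; (iv) the function $f_A$ is $|n|$-periodic and $f_B$ is identically zero. Furthermore, if $|n|\leq 2$ these conditions imply $f=0$.
   Context: $f_A,f_B$ are alternating ($f(x^{-1})=-f(x)$). Each non-trivial element of $\mathbb{F}_2$ has a unique normal form $a^{k_1}b^{l_1}\cdots a^{k_m}b^{l_m}$ with all exponents non-zero except possibly $k_1$ or $l_m$, and $f(1)=0$, $f(a^{k_1}b^{l_1}\cdots a^{k_m}b^{l_m})=f_A(a^{k_1})+f_B(b^{l_1})+\dots+f_A(a^{k_m})+f_B(b^{l_m})$ (with $f_A(1)=f_B(1)=0$). The action of automorphisms on functions is $\tau.f=f\circ\tau^{-1}$; $\widehat f(g)=\lim_{k\to\infty}f(g^k)/k$ is the homogenization; $\omega_f\in\mathrm{H}^2_\mathrm{b}(\mathbb{F}_2,\mathbb{R})$ is the bounded class of $\partial f(g,h)=f(g)+f(h)-f(gh)$, and $\tau.\omega_f=\omega_{\tau.f}$. $f_A$ is $|n|$-periodic means $f_A(a^{k+n})=f_A(a^k)$ for all $k\in\mathbb{Z}$.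 *)

From mathcomp Require Import all_boot all_order all_algebra.
From mathcomp Require Import all_classical all_reals all_analysis.
Set Implicit Arguments. Unset Strict Implicit. Unset Printing Implicit Defensive.
Import Order.TTheory GRing.Theory Num.Theory numFieldNormedType.Exports.
Local Open Scope ring_scope.

(* A syllable (false, k) stands for a^k, (true, k) for b^k. *)
Definition syl := (bool * int)%type.

Definition reducedb (w : seq syl) : bool :=
  all (fun s : syl => s.2 != 0) w && sorted (fun x y : syl => x.1 != y.1) w.

Definition push (s : syl) (w : seq syl) : seq syl :=
  if s.2 == 0 then w else
  match w with
  | [::] => [:: s]
  | t :: w' =>
      if t.1 == s.1 then
        (if s.2 + t.2 == 0 then w' else (s.1, s.2 + t.2) :: w')
      else s :: w
  end.

Definition norm (w : seq syl) : seq syl := foldr push [::] w.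

Definition F2 := {w : seq syl | reducedb w}.

Definition F2one : F2 := exist _ [::] isT.
Definition F2mul (x y : F2) : F2 := insubd F2one (norm (val x ++ val y)).
Definition F2inv (x : F2) : F2 :=
  insubd F2one (rev (map (fun s : syl => (s.1, - s.2)) (val x))).
Definition F2pow (g : F2) (z : int) : F2 :=
  match z with
  | Posz m => iter m (F2mul g) F2one
  | Negz m => iter m.+1 (F2mul (F2inv g)) F2one
  end.

Definition gen_a : F2 := insubd F2one [:: (false, 1%:Z)].
Definition gen_b : F2 := insubd F2one [:: (true, 1%:Z)].

Definition F2ext (xa xb : F2) (w : F2) : F2 :=
  foldr (fun s acc => F2mul (F2pow (if s.1 then xb else xa) s.2) acc) F2one (val w).

Definition tau (n : int) : F2 -> F2 := F2ext gen_a (F2mul (F2pow gen_a n) gen_b).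
Definition tau_inv (n : int) : F2 -> F2 := tau (- n).

Definition alternatingf (R : realType) (h : int -> R) := forall k, h (- k) = - h k.
Definition boundedfun (T : Type) (R : realType) (h : T -> R) :=
  exists C : R, forall x, `|h x| <= C.

Definition split_qm (R : realType) (fA fB : int -> R) (g : F2) : R :=
  \sum_(s <- val g) (if s.1 then fB s.2 else fA s.2).

(* action of an automorphism (given by its inverse) on functions: tau.f = f o tau^{-1} *)
Definition act (R : realType) (tauinv : F2 -> F2) (f : F2 -> R) : F2 -> R :=
  fun g => f (tauinv g).

Definition homog (R : realType) (f : F2 -> R) (g : F2) : R :=
  limn (fun k : nat => f (F2pow g k%:Z) / k%:R).

Definition cobound (R : realType) (f : F2 -> R) (g h : F2) : R :=
  f g + f h - f (F2mul g h).

(* equality of the bounded classes [d f1] = [d f2] in H^2_b(F_2, R):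
   the cocycles differ by the coboundary of a bounded 1-cochain *)
Definition same_bclass (R : realType) (f1 f2 : F2 -> R) : Prop :=
  exists beta : F2 -> R, boundedfun beta /\
    forall g h, cobound f1 g h - cobound f2 g h = cobound beta g h.

From mathcomp Require Import all_boot all_order all_algebra.
From mathcomp Require Import all_classical all_reals all_analysis.
From mathcomp Require Import zify ring lra.
Set Implicit Arguments. Unset Strict Implicit. Unset Printing Implicit Defensive.
Import Order.TTheory GRing.Theory Num.Theory numFieldNormedType.Exports.
Local Open Scope ring_scope.

(* If f_B = 0 and f_A is n-periodic, then tau_n^-1 : b |-> a^-n b changes the
   normal form of a reduced word only by shifting a-exponents by multiples of n
   and by inserting or deleting syllables a^(+-n), whose f_A-value is 0; keeping
   track of how the image of a suffix can begin shows that b-syllables never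
   cancel, so f is invariant.
   Conversely, (ii) and (iii) both say that along the powers of any x the slopes
   of f o tau_n^-1 and of f differ by psi(x) for a homomorphism psi (psi = 0 for
   (ii), psi = f o tau_n^-1 - f - beta for (iii)).  For b, a^n b and a^k b^p
   these slopes are explicit, as the elements and their images are cyclically
   reduced or single syllables; the resulting linear relations between values
   of f_A and f_B, together with the boundedness of f_A, force (iv).  Finally, an
   alternating function of period 1 or 2 vanishes. *)

(** * Reduced words and the group law *)

Lemma reducedb_cons (s : syl) w : reducedb (s :: w) =
  [&& s.2 != 0, reducedb w & (if w is t :: _ then s.1 != t.1 else true)].
Proof.
case: w => [|t w]; rewrite /reducedb /= ?andbT //.
by rewrite -!andbA; apply/idP/idP => /and5P[-> -> -> -> ->].
Qed.

Lemma reducedb_push s w : reducedb w -> reducedb (push s w).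
Proof.
case: s => g i; rewrite /push /=; case: eqP => // /eqP i0.
case: w => [|[h j] w] /=; first by rewrite reducedb_cons i0.
rewrite reducedb_cons /= => /and3P[j0 rw hw].
case: eqP => [hg|/eqP hg].
  case: eqP => // /eqP ij.
  by rewrite reducedb_cons ij rw /=; move: hw; rewrite hg.
by rewrite reducedb_cons i0 reducedb_cons j0 rw hw eq_sym hg.
Qed.

Lemma push_reduced s w : reducedb (s :: w) -> push s w = s :: w.
Proof.
case: s => g i; rewrite reducedb_cons /push /= => /and3P[/negbTE -> _].
by case: w => [|[h j] w] //= hg; rewrite eq_sym (negbTE hg).
Qed.

Lemma push0 g w : push (g, 0) w = w.
Proof. by []. Qed.

Lemma reducedb_foldr_push u w : reducedb w -> reducedb (foldr push w u).
Proof. by elim: u => //= s u IH /IH; apply: reducedb_push. Qed.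

Lemma reducedb_norm u : reducedb (norm u).
Proof. exact: reducedb_foldr_push. Qed.

Lemma foldr_push_reduced u v : reducedb (u ++ v) -> foldr push v u = u ++ v.
Proof.
elim: u => [|s u IH] //= ruv; have := ruv; rewrite reducedb_cons => /and3P[_ ru _].
by rewrite IH // push_reduced.
Qed.

Lemma norm_reduced w : reducedb w -> norm w = w.
Proof. by move=> rw; rewrite /norm foldr_push_reduced ?cats0. Qed.

Lemma norm_cat_reduced u v : reducedb v -> norm (u ++ v) = foldr push v u.
Proof. by move=> rv; rewrite /norm foldr_cat -/(norm v) norm_reduced. Qed.

Lemma val_F2mul x y : val (F2mul x y) = foldr push (val y) (val x).
Proof.
rewrite /F2mul insubdK; last exact: reducedb_norm.
by rewrite norm_cat_reduced //; case: y.
Qed.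

Lemma push_push g i j w : reducedb w ->
  push (g, i) (push (g, j) w) = push (g, i + j) w.
Proof.
have [->|j0] := eqVneq j 0; first by rewrite addr0.
have [->|i0] := eqVneq i 0; first by rewrite add0r.
rewrite /push /= (negbTE j0) (negbTE i0).
case: w => [|[h k] w] /=; first by rewrite eqxx; case: eqP.
rewrite reducedb_cons /= => /and3P[k0 _].
have [->|hg] := eqVneq h g => hw; last by rewrite /= eqxx; case: eqP.
have [jk|jk] := eqVneq (j + k) 0; last first.
  rewrite /= eqxx addrA; have [ij|//] := eqVneq (i + j) 0.
  by rewrite ij add0r (negbTE k0).
have -> : i + j + k = i by rewrite -addrA jk addr0.
have cons_w : push (g, i) w = (g, i) :: w.
  by rewrite /push (negbTE i0); case: w hw => [|[h' k'] w] //= hw; rewrite eq_sym (negbTE hw).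
move: cons_w; rewrite /push /= (negbTE i0) => ->.
have [ij|//] := eqVneq (i + j) 0.
by have -> : k = i by move: jk ij => /eqP jk /eqP ij; lia.
Qed.

Lemma foldr_push_push s u w : reducedb u -> reducedb w ->
  foldr push w (push s u) = push s (foldr push w u).
Proof.
case: s => g i ru rw; have [->|i0] := eqVneq i 0; first by [].
rewrite [push (g, i) u]/push /= (negbTE i0).
case: u ru => [|[h j] u] //= ru; have [->|//] := eqVneq h g.
rewrite push_push; last by apply/reducedb_foldr_push.
by have [ij|//] := eqVneq (i + j) 0; rewrite ij.
Qed.

Lemma foldr_push_norm u w : reducedb w -> foldr push w (norm u) = foldr push w u.
Proof.
move=> rw; elim: u => [|s u IH] //=.
by rewrite foldr_push_push ?IH //; apply: reducedb_norm.
Qed.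

Lemma F2mulA x y z : F2mul (F2mul x y) z = F2mul x (F2mul y z).
Proof.
apply: val_inj; rewrite !val_F2mul.
rewrite -(norm_cat_reduced (val x)); last by case: y.
by rewrite foldr_push_norm ?foldr_cat //; case: z.
Qed.

Lemma F2mul1g x : F2mul F2one x = x.
Proof. by apply: val_inj; rewrite val_F2mul. Qed.

Lemma F2mulg1 x : F2mul x F2one = x.
Proof. by apply: val_inj; rewrite val_F2mul -/(norm _) norm_reduced //; case: x. Qed.

Definition inv_word (u : seq syl) : seq syl := rev (map (fun s : syl => (s.1, - s.2)) u).

Lemma reducedb_inv_word u : reducedb u -> reducedb (inv_word u).
Proof.
rewrite /reducedb /inv_word all_rev rev_sorted => /andP[a s]; apply/andP; split.
  by rewrite all_map; apply: sub_all a => t /=; rewrite oppr_eq0.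
by rewrite sorted_map; apply: sub_sorted s => t1 t2 /=; rewrite eq_sym.
Qed.

Lemma inv_wordK : involutive inv_word.
Proof.
move=> u; rewrite /inv_word map_rev revK -map_comp map_id_in // => -[g i] _ /=.
by rewrite opprK.
Qed.

Lemma foldr_push_inv_word u w : reducedb w ->
  foldr push (foldr push w u) (inv_word u) = w.
Proof.
move=> rw; elim: u => [|[g i] u IH] //=.
rewrite /inv_word /= rev_cons foldr_rcons /= push_push; last exact: reducedb_foldr_push.
by rewrite addNr push0.
Qed.

Lemma val_F2inv x : val (F2inv x) = inv_word (val x).
Proof. by rewrite /F2inv insubdK //; apply: reducedb_inv_word; case: x. Qed.

Lemma F2mulVg x : F2mul (F2inv x) x = F2one.
Proof.
apply: val_inj; rewrite val_F2mul val_F2inv -{1}(norm_reduced (valP x)).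
exact: foldr_push_inv_word.
Qed.

Lemma F2mulgV x : F2mul x (F2inv x) = F2one.
Proof.
apply: val_inj; rewrite val_F2mul val_F2inv.
have r : reducedb (inv_word (val x)) by exact/reducedb_inv_word/valP.
by rewrite -(norm_reduced r) /norm -{2}(inv_wordK (val x)) foldr_push_inv_word.
Qed.

Lemma F2powSz x i : F2pow x (i + 1) = F2mul x (F2pow x i).
Proof.
case: i => [m|[|m]]; first by have -> : Posz m + 1 = Posz m.+1 by lia.
  by rewrite /= F2mulg1 F2mulgV.
have -> : Negz m.+1 + 1 = Negz m by rewrite !NegzE; lia.
rewrite [F2pow x (Negz m.+1)]/= -/(F2pow x (Negz m)).
by rewrite -F2mulA F2mulgV F2mul1g.
Qed.

Lemma F2powBz x i : F2pow x (i - 1) = F2mul (F2inv x) (F2pow x i).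
Proof. by rewrite -{2}(subrK 1 i) F2powSz -F2mulA F2mulVg F2mul1g. Qed.

Lemma F2powD x i j : F2pow x (i + j) = F2mul (F2pow x i) (F2pow x j).
Proof.
case: i => [m|m]; elim: m => [|m IH].
- by rewrite add0r F2mul1g.
- by rewrite -addn1 PoszD addrAC F2powSz IH -F2mulA -F2powSz.
- by rewrite NegzE addrC F2powBz /= F2mulg1.
- have -> : Negz m.+1 + j = Negz m + j - 1 by rewrite !NegzE; lia.
  by rewrite F2powBz IH -F2mulA.
Qed.

Section Extension.
Variables xa xb : F2.

Definition ext_syl (s : syl) : F2 := F2pow (if s.1 then xb else xa) s.2.
Definition ext_word (u : seq syl) : F2 := foldr (fun s acc => F2mul (ext_syl s) acc) F2one u.

Lemma ext_word_cat u v : ext_word (u ++ v) = F2mul (ext_word u) (ext_word v).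
Proof. by elim: u => [|s u IH] /=; rewrite ?F2mul1g // IH F2mulA. Qed.

Lemma ext_word_push s v : reducedb v -> ext_word (push s v) = F2mul (ext_syl s) (ext_word v).
Proof.
case: s => g i rv; have [->|i0] := eqVneq i 0; first by rewrite push0 /ext_syl /= F2mul1g.
rewrite /push /= (negbTE i0); case: v rv => [|[h j] v] //= rv.
have [->|//] := eqVneq h g; rewrite -F2mulA /ext_syl /= -F2powD.
by have [ij|//] := eqVneq (i + j) 0; rewrite ij F2mul1g.
Qed.

Lemma ext_word_norm u : ext_word (norm u) = ext_word u.
Proof.
elim: u => [|s u IH] //=.
by rewrite ext_word_push ?IH //; apply: reducedb_norm.
Qed.

Lemma F2extM x y : F2ext xa xb (F2mul x y) = F2mul (F2ext xa xb x) (F2ext xa xb y).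
Proof.
rewrite /F2ext -!/(ext_word _) {1}/F2mul insubdK; last exact: reducedb_norm.
by rewrite ext_word_norm ext_word_cat.
Qed.

Lemma F2ext_pow x (j : nat) : F2ext xa xb (F2pow x j) = F2pow (F2ext xa xb x) j.
Proof. by elim: j => [|j IH] //=; rewrite F2extM IH. Qed.

End Extension.

Lemma tauM m x y : tau m (F2mul x y) = F2mul (tau m x) (tau m y).
Proof. exact: F2extM. Qed.

Lemma tau_pow m x (j : nat) : tau m (F2pow x j) = F2pow (tau m x) j.
Proof. exact: F2ext_pow. Qed.

Lemma morph_F2pow (R : realType) (psi : F2 -> R) :
  {morph psi : x y / F2mul x y >-> x + y} -> forall x (j : nat), psi (F2pow x j) = j%:R * psi x.
Proof.
move=> psiM x; have psi1 : psi F2one = 0 by have := psiM F2one F2one; rewrite F2mul1g; lra.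
by elim=> [|j IH] //=; rewrite ?mul0r // psiM IH -addn1 natrD mulrDl mul1r addrC.
Qed.

Definition F2of (w : seq syl) : F2 := insubd F2one w.

Lemma val_F2of w : reducedb w -> val (F2of w) = w.
Proof. by move=> rw; rewrite /F2of insubdK. Qed.

Lemma F2of_val x : F2of (val x) = x.
Proof. by apply: val_inj; rewrite val_F2of //; apply: valP. Qed.

Definition word_rep (j : nat) (u : seq syl) : seq syl := flatten (nseq j u).

Lemma word_repS j u : word_rep j.+1 u = u ++ word_rep j u.
Proof. by []. Qed.

Lemma last_word_rep2 s t u p : last s (word_rep p [:: t; u]) = if p is 0 then s else u.
Proof. by elim: p s => [|p IH] s //=; rewrite IH; case: p {IH}. Qed.

(* For reduced [w] this makes [w ++ w] reduced, so powers are repetitions. *)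
Definition cyclically_reduced (w : seq syl) : bool :=
  if w is x :: u then (last x u).1 != x.1 else true.

Lemma reducedb_cat x u y v : reducedb (x :: u) -> reducedb (y :: v) ->
  (last x u).1 != y.1 -> reducedb ((x :: u) ++ (y :: v)).
Proof.
rewrite /reducedb /= => /andP[/andP[x0 au] pu] /andP[/andP[y0 av] pv] xy.
by rewrite x0 all_cat au /= y0 av /= cat_path pu /= xy pv.
Qed.

Lemma reducedb_word_rep j w : reducedb w -> cyclically_reduced w ->
  reducedb (word_rep j w).
Proof.
case: w => [|x u] rw cw; first by elim: j.
elim: j => [|[|j] IH] //; first by rewrite /word_rep /= cats0.
by rewrite word_repS; apply: reducedb_cat.
Qed.

Lemma val_F2pow_cyclic y (j : nat) : cyclically_reduced (val y) ->
  val (F2pow y j) = word_rep j (val y).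
Proof.
move=> cy; elim: j => [|j IH] //=; rewrite val_F2mul IH.
by rewrite foldr_push_reduced // -word_repS; apply/reducedb_word_rep/cy/valP.
Qed.

Lemma val_F2pow_syl g K (j : nat) : K != 0 ->
  val (F2pow (F2of [:: (g, K)]) j) = if j == 0%N then [::] else [:: (g, K * j%:Z)].
Proof.
move=> K0; elim: j => [|j IH] //=.
rewrite val_F2mul IH val_F2of ?reducedb_cons ?K0 //.
case: j {IH} => [|j] /=; first by rewrite /push (negbTE K0) mulr1.
rewrite /push (negbTE K0) /= eqxx.
have -> : K + K * j.+1%:Z = K * j.+2%:Z by rewrite -[j.+2%:Z]/(1 + j.+1%:Z) mulrDr mulr1.
by rewrite mulf_eq0 (negbTE K0).
Qed.

Lemma val_F2pow_gen g (k : int) :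
  val (F2pow (F2of [:: (g, 1)]) k) = if k == 0 then [::] else [:: (g, k)].
Proof.
case: k => [j|p]; first by rewrite val_F2pow_syl // mul1r; case: j.
change (F2pow _ (Negz p)) with (F2pow (F2inv (F2of [:: (g, 1)])) p.+1).
have -> : F2inv (F2of [:: (g, 1)]) = F2of [:: (g, -1)].
  by apply: val_inj; rewrite val_F2inv !val_F2of.
by rewrite val_F2pow_syl // NegzE mulN1r.
Qed.

Lemma foldr_push_word_rep_ind (P Q : seq syl -> Prop) u :
  (forall X, Q X -> P X) -> (forall X, P X -> Q (foldr push X u)) ->
  forall p X, P X -> Q (foldr push X (word_rep p.+1 u)).
Proof.
move=> QP step; elim=> [|p IH] X PX; first by rewrite /word_rep /= cats0; apply: step.
by rewrite word_repS foldr_cat; apply/step/QP/IH.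
Qed.

Section Weight.
Variables (R : realType) (fA fB : int -> R).

Definition weight (u : seq syl) : R := \sum_(s <- u) (if s.1 then fB s.2 else fA s.2).

Lemma weight_nil : weight [::] = 0.
Proof. exact: big_nil. Qed.

Lemma weight_cons s u : weight (s :: u) = (if s.1 then fB s.2 else fA s.2) + weight u.
Proof. exact: big_cons. Qed.

Lemma weight_cat u v : weight (u ++ v) = weight u + weight v.
Proof. exact: big_cat. Qed.

Lemma weight_word_rep j u : weight (word_rep j u) = j%:R * weight u.
Proof.
elim: j => [|j IH]; first by rewrite mul0r weight_nil.
by rewrite word_repS weight_cat IH -addn1 natrD mulrDl mul1r addrC.
Qed.

Lemma split_qm_cyclic_pow y (j : nat) : cyclically_reduced (val y) ->
  split_qm fA fB (F2pow y j) = j%:R * weight (val y).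
Proof. by move=> cy; rewrite /split_qm val_F2pow_cyclic // -/(weight _) weight_word_rep. Qed.

End Weight.

Definition amb (m : int) : F2 := F2mul (F2pow gen_a m) gen_b.

Lemma val_amb m : m != 0 -> val (amb m) = [:: (false, m); (true, 1)].
Proof.
move=> m0; rewrite val_F2mul val_F2pow_gen (negbTE m0) /= val_F2of //.
by rewrite /push (negbTE m0).
Qed.

Section TauSyllables.
Variables (m : int) (m0 : m != 0).

Lemma val_tau_syl_a k :
  val (ext_syl gen_a (amb m) (false, k)) = if k == 0 then [::] else [:: (false, k)].
Proof. exact: val_F2pow_gen. Qed.

Lemma val_tau_syl_b_pos (j : nat) :
  val (ext_syl gen_a (amb m) (true, j%:Z)) = word_rep j [:: (false, m); (true, 1)].
Proof. by rewrite -(val_amb m0); apply: val_F2pow_cyclic; rewrite val_amb. Qed.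

Lemma val_tau_syl_b_neg (p : nat) :
  val (ext_syl gen_a (amb m) (true, Negz p)) = word_rep p.+1 [:: (true, -1); (false, - m)].
Proof.
change (ext_syl _ _ _) with (F2pow (F2inv (amb m)) p.+1).
have vi : val (F2inv (amb m)) = [:: (true, -1); (false, - m)] by rewrite val_F2inv val_amb.
by rewrite -vi; apply: val_F2pow_cyclic; rewrite vi.
Qed.

End TauSyllables.

Definition ab (k l : int) : F2 := F2mul (F2pow gen_a k) (F2pow gen_b l).

Lemma val_ab k l : k != 0 -> l != 0 -> val (ab k l) = [:: (false, k); (true, l)].
Proof.
move=> k0 l0; rewrite val_F2mul !val_F2pow_gen (negbTE k0) (negbTE l0) /=.
by rewrite /push (negbTE k0).
Qed.

Lemma tau_gen_a_pow m k : tau m (F2pow gen_a k) = F2pow gen_a k.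
Proof.
apply: val_inj; rewrite /tau /F2ext; have := val_F2pow_gen false k.
by case: eqP => _ E; rewrite E //= F2mulg1 E.
Qed.

Lemma tau_gen_b m : tau m gen_b = amb m.
Proof.
rewrite /tau /F2ext (_ : gen_b = F2of [:: (true, 1)]) // val_F2of //=.
by rewrite !F2mulg1.
Qed.

Lemma tau_ab m k (p : nat) : tau m (ab k p) = F2mul (F2pow gen_a k) (F2pow (amb m) p).
Proof. by rewrite tauM tau_gen_a_pow tau_pow tau_gen_b. Qed.

Lemma val_tau_ab m k (p : nat) : m != 0 -> k != 0 ->
  val (tau m (ab k p.+1)) = push (false, k) (word_rep p.+1 [:: (false, m); (true, 1)]).
Proof.
move=> m0 k0.
by rewrite tau_ab val_F2mul val_F2pow_gen (negbTE k0) val_F2pow_cyclic val_amb.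
Qed.

(** * Periodicity implies invariance *)

Lemma alternating0 (R : realType) (h : int -> R) : alternatingf h -> h 0 = 0.
Proof.
move=> ha; have := ha 0; rewrite oppr0 => /eqP.
by rewrite -subr_eq0 opprK -mulr2n mulrn_eq0 /= => /eqP.
Qed.

Section PeriodicInvariance.
Variables (R : realType) (fA : int -> R) (m : int).
Hypotheses (m0 : m != 0) (fA_alt : alternatingf fA) (fA_per : forall k, fA (k + m) = fA k).

Local Notation weight := (weight fA (fun=> 0)).

Let fA_m : fA m = 0.
Proof. by rewrite -[m]add0r fA_per alternating0. Qed.

Lemma weight_push_b l X : weight (push (true, l) X) = weight X.
Proof.
rewrite /push /=; case: ifP => // _.
case: X => [|[[] j] X] /=; rewrite ?weight_cons ?weight_nil /= ?add0r //.
by case: ifP; rewrite ?weight_cons /= ?add0r.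
Qed.

Lemma weight_push_period k X : (forall i, fA (i + k) = fA i) ->
  weight (push (false, k) X) = weight X.
Proof.
move=> per; have fAk : fA k = 0 by rewrite -[k]add0r per alternating0.
rewrite /push /=; case: ifP => // _; case: X => [|[[] j] X] /=.
- by rewrite weight_cons weight_nil /= fAk addr0.
- by rewrite weight_cons /= fAk add0r.
rewrite weight_cons /=; have [kj|_] := eqVneq (k + j) 0; last first.
  by rewrite weight_cons /= [k + j]addrC per.
by rewrite -(addr0_eq kj) -per addNr alternating0 // add0r.
Qed.

Lemma weight_foldr_push_word_rep p u X :
  all (fun s : syl => s.1 || (s.2 == m) || (s.2 == - m)) u ->
  weight (foldr push X (word_rep p u)) = weight X.
Proof.
move=> hu; have block Y : weight (foldr push Y u) = weight Y.
  elim: u hu => [|[g k] u IHu] //= /andP[hk hu]; rewrite -(IHu hu).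
  case: g hk => /= hk; first exact: weight_push_b.
  apply: weight_push_period => i; case/orP: hk => /eqP -> //.
  by rewrite -[in RHS](subrK m i) fA_per.
by elim: p => [|p IH] //; rewrite word_repS foldr_cat block.
Qed.

Lemma weight_push_a k X : (forall j Z, X = (false, j) :: Z -> j = m) ->
  weight (push (false, k) X) = fA k + weight X.
Proof.
move=> hX; rewrite /push /=; have [->|k0] := eqVneq k 0; first by rewrite alternating0 // add0r.
case: X hX => [|[[] j] X] hX; rewrite /= ?weight_cons ?weight_nil //=.
rewrite (hX j X erefl); have [km|_] := eqVneq (k + m) 0; last first.
  by rewrite weight_cons /= fA_per fA_m add0r.
by rewrite -(addr0_eq km) fA_alt addrA subrr add0r.
Qed.

(* Possible beginnings of the image of a reduced word: they rule out any
   cancellation of b-syllables when the image of one more syllable is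
   prepended. *)
Definition admits_bpos (X : seq syl) := forall e Z, X = (true, e) :: Z -> 0 < e.
Definition admits_bneg (X : seq syl) := forall e Z, X = (false, m) :: (true, e) :: Z -> e < 0.
Definition head_ambpos (X : seq syl) := exists e Z, 0 < e /\ X = (false, m) :: (true, e) :: Z.
Definition head_bneg (X : seq syl) := exists e Z, e < 0 /\ X = (true, e) :: Z.

Lemma head_ambpos_block p X : admits_bpos X ->
  head_ambpos (foldr push X (word_rep p.+1 [:: (false, m); (true, 1)])).
Proof.
apply: foldr_push_word_rep_ind => {p X} [X [e [Z [_ ->]]] //|X hX /=].
have [e [Z [e0 ->]]] : exists e Z, 0 < e /\ push (true, 1) X = (true, e) :: Z.
  case: X hX => [|[[] j] X] hX; [by exists 1, [::] | | by exists 1, ((false, j) :: X)].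
  have j0 : 0 < 1 + j by have := hX j X erefl; lia.
  by exists (1 + j), X; rewrite /push /= gt_eqF.
by exists e, Z; rewrite /push /= (negbTE m0).
Qed.

Lemma head_bneg_block p X : admits_bneg X ->
  head_bneg (foldr push X (word_rep p.+1 [:: (true, -1); (false, - m)])).
Proof.
apply: foldr_push_word_rep_ind => {p X} [X [e [Z [_ ->]]] //|X hX /=].
have push_bneg Z : (forall e Z', Z = (true, e) :: Z' -> e < 0) -> head_bneg (push (true, -1) Z).
  case: Z => [|[[] j] Z] hZ; [by exists (-1), [::] | | by exists (-1), ((false, j) :: Z)].
  have j0 : -1 + j < 0 by have := hZ j Z erefl; lia.
  by exists (-1 + j), Z; rewrite /push /= lt_eqF.
apply: push_bneg => e Z; rewrite /push /= oppr_eq0 (negbTE m0).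
case: X hX => [|[[] j] X] //= hX; have [jm|jm] := eqVneq j m; last first.
  by rewrite addrC subr_eq0 (negbTE jm).
by rewrite jm addNr eqxx => XE; apply: (hX e Z); rewrite jm XE.
Qed.

Lemma admits_push_a k X : k != 0 -> head_ambpos X \/ head_bneg X ->
  admits_bpos (push (false, k) X) /\ admits_bneg (push (false, k) X).
Proof.
rewrite /push /= => k0; rewrite (negbTE k0).
case=> [[e [Z [e0 ->]]]|[e [Z [e0 ->]]]] /=; last by split=> e' Z' [] // _ <-.
have [km|km] := eqVneq (k + m) 0; first by split=> e' Z' [] // <-.
by split=> e' Z' [] //= /eqP; rewrite -subr_eq0 addrK (negbTE k0).
Qed.

Definition tau_image_shape (w X : seq syl) : Prop :=
  match w with
  | [::] => X = [::]
  | (false, _) :: _ => admits_bpos X /\ admits_bneg X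
  | (true, _) :: _ => head_ambpos X \/ head_bneg X
  end.

Lemma tau_image w : reducedb w ->
  let X := val (ext_word gen_a (amb m) w) in weight X = weight w /\ tau_image_shape w X.
Proof.
elim: w => [|[g i] w IH] //=; rewrite reducedb_cons /= => /and3P[i0 rw hw].
have [IHw IHs] := IH rw; rewrite val_F2mul.
move: (val (ext_word _ _ w)) IHw IHs => X IHw IHs.
case: g hw => hw.
  have [hXp hXn] : admits_bpos X /\ admits_bneg X.
    by case: w hw IHs {IH IHw rw} => [|[[] j] w] //= _ ->.
  rewrite weight_cons /= add0r -IHw; case: i i0 => [[|j]|p] // _.
    rewrite val_tau_syl_b_pos //; split; last by left; apply: head_ambpos_block.
    by rewrite weight_foldr_push_word_rep //= eqxx.
  rewrite val_tau_syl_b_neg //; split; last by right; apply: head_bneg_block.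
  by rewrite weight_foldr_push_word_rep //= eqxx !orbT.
rewrite val_tau_syl_a (negbTE i0) /= weight_cons /= -IHw.
case: w hw IHw IHs {IH rw} => [|[[] j] w] //= _ IHw IHs.
  by rewrite IHs /push (negbTE i0) weight_cons weight_nil; split=> //; split=> e Z [].
split; last exact: admits_push_a.
by apply: weight_push_a => j' Z; case: IHs => [[e [Z' [_ ->]]] [] | [e [Z' [_ ->]]]].
Qed.

Lemma split_qm_tau g : split_qm fA (fun=> 0) (tau m g) = split_qm fA (fun=> 0) g.
Proof. by have [] := tau_image (valP g). Qed.

End PeriodicInvariance.

(** * Slopes along powers *)

Section LinearGrowth.
Variable R : realType.

Definition linear_growth (u : nat -> R) (c : R) :=
  exists C, forall j : nat, `|u j - j%:R * c| <= C.

Lemma bounded_multiples_eq0 (c C : R) : (forall j : nat, `|j%:R * c| <= C) -> c = 0.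
Proof.
move=> h; apply/eqP; apply: contraT => c0.
have C0 : 0 <= C by apply: le_trans (h 0%N).
have cp : 0 < `|c| by rewrite normr_gt0.
have := h (Num.bound (C / `|c|)); rewrite normrM normr_nat.
have := archi_boundP (divr_ge0 C0 (ltW cp)); rewrite ltr_pdivrMr // => H1 H2.
by have := lt_le_trans H1 H2; rewrite ltxx.
Qed.

Lemma linear_growth_unique u c1 c2 : linear_growth u c1 -> linear_growth u c2 -> c1 = c2.
Proof.
move=> [C1 h1] [C2 h2]; apply/eqP; rewrite -subr_eq0; apply/eqP.
apply: (@bounded_multiples_eq0 _ (C1 + C2)) => j.
have -> : j%:R * (c1 - c2) = (u j - j%:R * c2) - (u j - j%:R * c1) by ring.
by apply: le_trans (ler_normB _ _) _; rewrite addrC; apply: lerD.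
Qed.

Lemma linear_growthB u v c d : linear_growth u c -> linear_growth v d ->
  linear_growth (fun j => u j - v j) (c - d).
Proof.
move=> [C hu] [D hv]; exists (C + D) => j.
have -> : u j - v j - j%:R * (c - d) = (u j - j%:R * c) - (v j - j%:R * d) by ring.
by apply: le_trans (ler_normB _ _) _; apply: lerD.
Qed.

Lemma linear_growth_limn u c : linear_growth u c -> limn (fun k : nat => u k / k%:R) = c.
Proof.
move=> [C h]; have C0 : 0 <= C by apply: le_trans (h 0%N).
apply: cvg_lim => //; apply/cvgrPdist_le => e e0; near=> k.
have k0 : (0 < k)%N by near: k; apply: nbhs_infty_gt.
have kC : C / e <= k%:R.
  apply: le_trans (ltW (archi_boundP _)) _; first exact: divr_ge0 (ltW e0).
  by rewrite ler_nat; near: k; apply: nbhs_infty_ge.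
have -> : c - u k / k%:R = - ((u k - k%:R * c) / k%:R).
  by rewrite mulrBl mulrAC divff ?mul1r ?opprB // pnatr_eq0 -lt0n.
rewrite normrN normrM normfV normr_nat ler_pdivrMr ?ltr0n //.
by apply: le_trans (h k) _; rewrite -ler_pdivrMl // mulrC.
Unshelve. all: by end_near.
Qed.

End LinearGrowth.

(** * Linear relations forcing periodicity *)

Section SlopeEquations.
Variable R : realType.

Lemma bounded_shift_defect_eq0 (h : int -> R) n c : boundedfun h ->
  (forall k, h (k - n) - h k = c) -> c = 0.
Proof.
move=> [C hC] hc; apply: (@bounded_multiples_eq0 _ _ (C + C)) => j.
have -> : j%:R * c = h (- (j%:Z * n)) - h 0.
  elim: j => [|j IH]; first by rewrite !mul0r oppr0 subrr.
  rewrite -addn1 natrD mulrDl mul1r IH -(hc (- (j%:Z * n))) PoszD mulrDl mul1r.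
  by rewrite opprD; ring.
by apply: le_trans (ler_normB _ _) _; apply: lerD.
Qed.

Lemma periodic_of_slope_equations (fA fB : int -> R) n c :
  n != 0 -> alternatingf fA -> alternatingf fB -> boundedfun fA ->
  fA (- n) + fB 1 = c -> - (fA n + fB 1) = c ->
  (forall k (p : nat), k != 0 -> k != n ->
     fA (k - n) + fB 1 + p%:R * (fA (- n) + fB 1) - (fA k + fB p.+1) = p.+1%:R * c) ->
  (forall k, fA (k + n) = fA k) /\ (forall k, fB k = 0).
Proof.
move=> n0 hA hB bA e_b e_anb e_akb.
have fB1 : fB 1 = 0 by move: e_b e_anb; rewrite hA; lra.
have cE : c = - fA n by rewrite -e_anb fB1 addr0.
have shift k : fA (k - n) - fA k = c.
  have [->|k0] := eqVneq k 0; first by rewrite sub0r hA alternating0 // subr0.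
  have [->|kn] := eqVneq k n; first by rewrite subrr alternating0 // sub0r.
  by have := e_akb k 0%N k0 kn; rewrite fB1 !mul0r mul1r; lra.
have c0 : c = 0 := bounded_shift_defect_eq0 bA shift.
have per k : fA (k + n) = fA k by have := shift (k + n); rewrite addrK c0; lra.
have fB_pos (q : nat) : fB q.+1 = 0.
  have nn0 : n + n != 0 by rewrite -mulr2n mulrn_eq0 (negbTE n0).
  have nnn : n + n != n by rewrite -subr_eq0 addrK.
  have fAn : fA n = 0 by apply/eqP; rewrite -oppr_eq0 -cE c0.
  by have := e_akb (n + n) q nn0 nnn; rewrite addrK per hA fB1 c0 fAn; lra.
split=> // -[[|p]|p]; [exact: alternating0 | exact: fB_pos |].
by rewrite NegzE hB fB_pos oppr0.
Qed.

End SlopeEquations.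

Lemma periodic_alternating_eq0 (R : realType) (h : int -> R) n : n != 0 -> `|n| <= 2 ->
  alternatingf h -> (forall k, h (k + n) = h k) -> forall k, h k = 0.
Proof.
move=> n0 n2 h_alt h_per.
have h_per2 k : h (k + 2) = h k.
  have : n = 1 \/ n = -1 \/ n = 2 \/ n = -2 by move: n2 n0; rewrite ler_norml => /andP[] *; lia.
  case=> [|[|[|]]] nE; rewrite nE in h_per.
  - by rewrite -[2]/(1 + 1) addrA !h_per.
  - by rewrite -(h_per (k + 2)) -(h_per (k + 2 + -1)); congr h; lia.
  - exact: h_per.
  - by rewrite -(h_per (k + 2)); congr h; lia.
have h0 := alternating0 h_alt.
have h1 : h 1 = 0 by have := h_per2 (-1); rewrite h_alt; lra.
have h_nat (j : nat) : h j = 0 /\ h j.+1 = 0.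
  elim: j => [|j [IH0 IH1]] //; split=> //.
  have -> : j.+2%:Z = j%:Z + 2 by rewrite -PoszD addn2.
  by rewrite h_per2.
by case=> j; [case: (h_nat j) | rewrite NegzE h_alt; case: (h_nat j) => _ ->; rewrite oppr0].
Qed.

Lemma act_tau_homog (R : realType) m (f : F2 -> R) :
  act (tau m) (homog f) = homog (act (tau m) f).
Proof.
apply: funext => g; rewrite /act /homog.
have -> : (fun k : nat => f (tau m (F2pow g k)) / k%:R) = (fun k => f (F2pow (tau m g) k) / k%:R).
  by apply: funext => k; rewrite tau_pow.
by [].
Qed.

Lemma same_bclass_refl (R : realType) (f : F2 -> R) : same_bclass f f.
Proof.
exists (fun=> 0); split; first by exists 0 => _; rewrite normr0.
by move=> g h; rewrite subrr /cobound addr0 subr0.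
Qed.

Section SplitQuasimorphism.
Variables (R : realType) (fA fB : int -> R) (n : int).
Hypotheses (n0 : n != 0) (fA_alt : alternatingf fA) (fB_alt : alternatingf fB)
  (fA_bd : boundedfun fA) (fB_bd : boundedfun fB).

Local Notation f := (split_qm fA fB).
Local Notation T := (tau_inv n).

Definition slope (x : F2) (c : R) := linear_growth (fun j : nat => f (F2pow x j)) c.

Lemma slope_cyclic y : cyclically_reduced (val y) -> slope y (weight fA fB (val y)).
Proof. by move=> cy; exists 0 => j; rewrite split_qm_cyclic_pow // subrr normr0. Qed.

Lemma slope_syl y s : val y = [:: s] -> slope y 0.
Proof.
move: s => [g K] vy; have K0 : K != 0 by have := valP y; rewrite vy reducedb_cons => /andP[].
have [[CA hCA] [CB hCB]] := (fA_bd, fB_bd).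
have [CA0 CB0] : 0 <= CA /\ 0 <= CB by split; [apply: le_trans (hCA 0) | apply: le_trans (hCB 0)].
exists (CA + CB) => j; rewrite mulr0 subr0 /split_qm -(F2of_val y) vy val_F2pow_syl //.
case: j => [|j] /=; first by rewrite big_nil normr0 addr_ge0.
rewrite big_cons big_nil addr0; case: g {vy}.
  by apply: le_trans (hCB _) _; rewrite lerDr.
by apply: le_trans (hCA _) _; rewrite lerDl.
Qed.

(* The common form of (ii) and (iii); for (iii), [psi] is the homomorphism
   [f o T - f - beta]. *)
Definition slope_defect (psi : F2 -> R) :=
  forall x c c', slope (T x) c' -> slope x c -> c' - c = psi x.

Lemma slope_defect_homog_inv : act T (homog f) = homog f -> slope_defect (fun=> 0).
Proof.
move=> hinv x c c' sT sx; have := congr1 (fun F => F x) hinv; rewrite /act /homog.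
by rewrite (linear_growth_limn sT) (linear_growth_limn sx) => ->; rewrite subrr.
Qed.

Lemma slope_defect_bclass : same_bclass (act T f) f ->
  exists psi, {morph psi : x y / F2mul x y >-> x + y} /\ slope_defect psi.
Proof.
move=> [beta [[Cb hb] hcob]]; pose psi g := f (T g) - f g - beta g.
have psiM : {morph psi : x y / F2mul x y >-> x + y}.
  by move=> x y; have := hcob x y; rewrite /cobound /act /psi; lra.
exists psi; split=> // x c c' sT sx.
apply: linear_growth_unique (linear_growthB sT sx) _; exists Cb => j.
by rewrite -(morph_F2pow psiM) /psi /tau_inv tau_pow opprB addrC subrK.
Qed.

Lemma split_factors_of_slope_defect psi : {morph psi : x y / F2mul x y >-> x + y} ->
  slope_defect psi -> (forall k, fA (k + n) = fA k) /\ (forall k, fB k = 0).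
Proof.
move=> psiM sd; have mn0 : - n != 0 by rewrite oppr_eq0.
have weight2 k l : weight fA fB [:: (false, k); (true, l)] = fA k + fB l.
  by rewrite /weight !big_cons big_nil addr0.
have slope_ab k l : k != 0 -> l != 0 -> slope (ab k l) (fA k + fB l).
  by move=> k0 l0; rewrite -weight2 -(val_ab k0 l0); apply: slope_cyclic; rewrite val_ab.
have psi_ab k (p : nat) : k != 0 -> psi (ab k p) = p%:R * psi gen_b.
  move=> k0; rewrite psiM morph_F2pow // -[RHS]add0r; congr (_ + _).
  have sa : slope (F2pow gen_a k) 0 by apply: slope_syl; rewrite val_F2pow_gen (negbTE k0).
  by rewrite -(sd _ 0 0 _ sa) ?subrr // /tau_inv tau_gen_a_pow.
apply: (periodic_of_slope_equations (c := psi gen_b) n0 fA_alt fB_alt fA_bd).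
- rewrite -weight2 -(subr0 (weight _ _ _)); apply: sd; last exact: (slope_syl (val_F2of _)).
  by rewrite /tau_inv tau_gen_b -(val_amb mn0); apply: slope_cyclic; rewrite val_amb.
- have := sd (ab n 1%N) (fA n + fB 1%N) 0; rewrite psi_ab // mul1r sub0r.
  apply; last exact: slope_ab.
  apply: (slope_syl (s := (true, 1))).
  by rewrite val_tau_ab // /push /= (negbTE n0) addrN.
move=> k p k0 kn; rewrite -(psi_ab k p.+1 k0); apply: sd; last exact: slope_ab.
have vT : val (T (ab k p.+1)) = (false, k - n) :: (true, 1) :: word_rep p [:: (false, - n); (true, 1)].
  by rewrite val_tau_ab // /push /= (negbTE k0) subr_eq0 (negbTE kn).
have -> : fA (k - n) + fB 1 + p%:R * (fA (- n) + fB 1) = weight fA fB (val (T (ab k p.+1))).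
  by rewrite vT !weight_cons weight_word_rep weight2 addrA.
by apply: slope_cyclic; rewrite vT /= last_word_rep2; case: p {vT}.
Qed.

Lemma act_tau_inv_periodic : (forall k, fA (k + n) = fA k) -> (forall k, fB k = 0) ->
  act T f = f.
Proof.
move=> per fB0; have -> : fB = fun=> 0 by apply: funext.
apply: funext => g; apply: split_qm_tau; rewrite ?oppr_eq0 // => k.
by rewrite -[in RHS](subrK n k) per.
Qed.

End SplitQuasimorphism.

Theorem theorem3p20 (R : realType) (fA fB : int -> R) (n : int)
  (hAalt : alternatingf fA) (hBalt : alternatingf fB)
  (hAbd : boundedfun fA) (hBbd : boundedfun fB) (hn : n != 0) :
  let f := split_qm fA fB in
  [/\ (act (tau_inv n) f = f <-> act (tau_inv n) (homog f) = homog f),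
      (act (tau_inv n) f = f <-> same_bclass (act (tau_inv n) f) f),
      (act (tau_inv n) f = f <->
         ((forall k : int, fA (k + n) = fA k) /\ (forall k : int, fB k = 0)))
    & (`|n| <= 2 -> act (tau_inv n) f = f -> forall g, f g = 0)].
Proof.
move=> f.
have iv_i := act_tau_inv_periodic (fB := fB) hn hAalt.
have ii_iv : act (tau_inv n) (homog f) = homog f -> (forall k, fA (k + n) = fA k) /\ (forall k, fB k = 0).
  move=> /slope_defect_homog_inv.
  by apply: split_factors_of_slope_defect => // x y; rewrite addr0.
have iii_iv : same_bclass (act (tau_inv n) f) f -> (forall k, fA (k + n) = fA k) /\ (forall k, fB k = 0).
  move=> /slope_defect_bclass [psi [psiM sd]].
  exact: split_factors_of_slope_defect sd.
have i_iv : act (tau_inv n) f = f -> (forall k, fA (k + n) = fA k) /\ (forall k, fB k = 0).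
  by move=> Hf; apply: iii_iv; rewrite Hf; apply: same_bclass_refl.
split; first split=> [Hf|/ii_iv[]//]; first by rewrite act_tau_homog Hf.
- by split=> [Hf|/iii_iv[]//]; rewrite Hf; apply: same_bclass_refl.
- by split=> [/i_iv|[]].
move=> n2 /i_iv[per fB0] g; rewrite /f /split_qm big1 // => -[[] k] _ /=; first exact: fB0.
exact: (periodic_alternating_eq0 hn n2 hAalt per).
Qed.
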